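(* Let $\mathscr{H}$ be a finite-dimensional complex Hilbert space, let $A=\{a_k\}_{k=1}^{m}$ be a tight frame of $\mathscr{H}$ with frame bound $\alpha>0$ and $B=\{b_j\}_{j=1}^{n}$ a tight frame of $\mathscr{H}$ with frame bound $\beta>0$, and suppose that $A$ and $B$ are $s$-order incompatible. Then for every nonzero vector (pure state) $|\varphi\rangle\in\mathscr{H}$, $$n_A(|\varphi\rangle)+n_B(|\varphi\rangle)\ge s,$$ and the bound is optimal: $\min_{|\varphi\rangle\neq 0}\big(n_A(|\varphi\rangle)+n_B(|\varphi\rangle)\big)=s$.
   Context: A finite family $\{a_k\}_{k=1}^{m}\subset\mathscr{H}$ is a tight frame with frame bound $\alpha>0$ if $\sum_{k=1}^{m}|\langle x,a_k\rangle|^2=\alpha\|x\|^2$ for all $x\in\mathscr{H}$. Write $I=\{1,\dots,m\}$, $J=\{1,\dots,n\}$. The tight frames $A$ (bound $\alpha$) and $B$ (bound $\beta$) are called $s$-order incompatible, for an integer $s$, if: (1) for all nonempty $S\subseteq I$, $T\subseteq J$ with $|S|+|T|<s$ and every nonzero $x\in\mathscr{H}$, the two equalities $\sum_{k\in S}|\langle x,a_k\rangle|^2=\alpha\|x\|^2$ and $\sum_{j\in T}|\langle x,b_j\rangle|^2=\beta\|x\|^2$ do not both hold; and (2) there exist nonempty $S\subseteq I$, $T\subseteq J$ with $|S|+|T|=s$ and a nonzero $x\in\mathscr{H}$ for which both equalities hold. For a vector $|\varphi\rangle$, $n_A(|\varphi\rangle)$ is the number of indices $k$ with $\langle a_k,\varphi\rangle\neq0$,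 and $n_B(|\varphi\rangle)$ is the number of indices $j$ with $\langle b_j,\varphi\rangle\neq 0$. *)

From HB Require Import structures.
From mathcomp Require Import all_boot all_order all_algebra.
From mathcomp Require Import complex.
Set Implicit Arguments. Unset Strict Implicit. Unset Printing Implicit Defensive.
Import Order.TTheory GRing.Theory Num.Theory.
Local Open Scope ring_scope.

(* The Hilbert space H is C^d, realised as column vectors 'cV[R[i]]_d,
   where R[i] = complex R for a real closed field R (R = reals gives C). *)

Definition cdot (R : rcfType) (d : nat) (x y : 'cV[R[i]]_d) : R[i] :=
  \sum_(l < d) x l 0 * (y l 0)^*.

Definition cnorm2 (R : rcfType) (d : nat) (x : 'cV[R[i]]_d) : R[i] := cdot x x.

Definition fsum (R : rcfType) (d m : nat) (a : 'I_m -> 'cV[R[i]]_d)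
  (S : {set 'I_m}) (x : 'cV[R[i]]_d) : R[i] :=
  \sum_(k in S) `|cdot x (a k)| ^+ 2.

Definition tight_frame (R : rcfType) (d m : nat) (a : 'I_m -> 'cV[R[i]]_d)
  (alpha : R[i]) : Prop :=
  0 < alpha /\
  forall x : 'cV[R[i]]_d,
    \sum_(k < m) `|cdot x (a k)| ^+ 2 = alpha * cnorm2 x.

Definition s_order_incompatible (R : rcfType) (d m n : nat)
  (a : 'I_m -> 'cV[R[i]]_d) (alpha : R[i])
  (b : 'I_n -> 'cV[R[i]]_d) (beta : R[i]) (s : nat) : Prop :=
  (forall (S : {set 'I_m}) (T : {set 'I_n}),
      S != set0 -> T != set0 -> (#|S| + #|T| < s)%N ->
      forall x : 'cV[R[i]]_d, x != 0 ->
        ~ (fsum a S x = alpha * cnorm2 x /\ fsum b T x = beta * cnorm2 x))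
  /\
  (exists (S : {set 'I_m}) (T : {set 'I_n}) (x : 'cV[R[i]]_d),
      [/\ S != set0, T != set0, (#|S| + #|T|)%N = s & x != 0] /\
      fsum a S x = alpha * cnorm2 x /\ fsum b T x = beta * cnorm2 x).

Definition nsupp (R : rcfType) (d m : nat) (a : 'I_m -> 'cV[R[i]]_d)
  (phi : 'cV[R[i]]_d) : nat :=
  #|[set k : 'I_m | cdot (a k) phi != 0]|.

From HB Require Import structures.
From mathcomp Require Import all_boot all_order all_algebra.
From mathcomp Require Import complex.
Import Order.TTheory GRing.Theory Num.Theory.
Local Open Scope ring_scope.

(* For a tight frame, sum_{k in S} |<x, a_k>|^2 = alpha ||x||^2 holds exactly
   when x is orthogonal to every a_k with k outside S, so the support
   {k | <a_k, x> <> 0} is the least such S, and it is nonempty for x <> 0.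
   Hence the two supports of phi form an admissible pair of index sets, and
   condition (1) forces n_A(phi) + n_B(phi) >= s; conversely the vector given
   by condition (2) has supports inside the witnessing S and T, so its count
   is at most |S| + |T| = s. *)

Lemma psumr_sqr_norm_eq0P (R : numDomainType) (I : finType) (P : pred I)
    (F : I -> R) :
  reflect (forall k, P k -> F k = 0) (\sum_(k | P k) `|F k| ^+ 2 == 0).
Proof.
apply: (iffP idP) => [/eqP /psumr_eq0P sum0 k Pk | F0].
  by apply/eqP; rewrite -normr_eq0 -sqrf_eq0 sum0 // => j _; rewrite exprn_ge0.
by rewrite big1 // => k /F0 ->; rewrite normr0 expr0n.
Qed.

Section InnerProduct.
Context {R : rcfType} {d : nat}.
Implicit Types x y : 'cV[R[i]]_d.

Lemma cdotC x y : cdot y x = (cdot x y)^*.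
Proof.
rewrite /cdot rmorph_sum; apply: eq_bigr => l _.
by rewrite rmorphM /= conjCK mulrC.
Qed.

Lemma cdot_eq0C x y : (cdot y x == 0) = (cdot x y == 0).
Proof. by rewrite cdotC conjC_eq0. Qed.

Lemma cnorm2E x : cnorm2 x = \sum_(l < d) `|x l 0| ^+ 2.
Proof. by apply: eq_bigr => l _; rewrite normCK. Qed.

Lemma cnorm2_gt0 x : x != 0 -> 0 < cnorm2 x.
Proof.
move=> x_neq0; rewrite cnorm2E lt_def sumr_ge0 ?andbT; last first.
  by move=> l _; rewrite exprn_ge0.
apply: contra x_neq0 => /psumr_sqr_norm_eq0P x0; apply/eqP/matrixP => l j.
by rewrite ord1 mxE x0.
Qed.

End InnerProduct.

Section TightFrame.
Context {R : rcfType} {d m : nat} (a : 'I_m -> 'cV[R[i]]_d) (alpha : R[i]).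
Hypothesis a_tight : tight_frame a alpha.
Implicit Types (x : 'cV[R[i]]_d) (S : {set 'I_m}).

Definition frame_supp x := [set k | cdot (a k) x != 0].

Lemma fsum_tightP S x :
  fsum a S x = alpha * cnorm2 x <-> forall k, k \notin S -> cdot x (a k) = 0.
Proof.
case: a_tight => _ /(_ x) <-.
rewrite /fsum [RHS](bigID (mem S)) /= -[LHS]addr0.
by split=> [/addrI/esym/eqP/psumr_sqr_norm_eq0P // | /psumr_sqr_norm_eq0P/eqP ->].
Qed.

Lemma fsum_frame_supp x : fsum a (frame_supp x) x = alpha * cnorm2 x.
Proof. by apply/fsum_tightP => k; rewrite inE negbK cdot_eq0C => /eqP. Qed.

Lemma frame_supp_neq0 x : x != 0 -> frame_supp x != set0.
Proof.
move=> x_neq0; have alpha_neq0 : alpha != 0 by case: a_tight => /lt0r_neq0.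
apply/eqP => supp0; have /esym/eqP := fsum_frame_supp x.
rewrite supp0 /fsum big_set0 mulf_eq0 (negPf alpha_neq0).
by rewrite gt_eqF // cnorm2_gt0.
Qed.

Lemma frame_supp_sub S x :
  fsum a S x = alpha * cnorm2 x -> frame_supp x \subset S.
Proof.
move/fsum_tightP=> out0; apply/subsetP => k; rewrite inE cdot_eq0C.
by apply: contraR => /out0 ->.
Qed.

End TightFrame.

Arguments fsum_frame_supp {R d m a alpha}.
Arguments frame_supp_neq0 {R d m a alpha}.
Arguments frame_supp_sub {R d m a alpha}.

Theorem mainTheorem2 (R : rcfType) (d m n : nat)
  (a : 'I_m -> 'cV[R[i]]_d) (alpha : R[i])
  (b : 'I_n -> 'cV[R[i]]_d) (beta : R[i]) (s : nat) :
  tight_frame a alpha -> tight_frame b beta ->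
  s_order_incompatible a alpha b beta s ->
  (forall phi : 'cV[R[i]]_d, phi != 0 -> (s <= nsupp a phi + nsupp b phi)%N) /\
  (exists phi : 'cV[R[i]]_d, phi != 0 /\ (nsupp a phi + nsupp b phi)%N = s).
Proof.
move=> a_tight b_tight [no_small [S [T [x [[_ _ card_ST x_neq0]]]]]].
move=> [fsumS fsumT].
have lower_bound phi : phi != 0 -> (s <= nsupp a phi + nsupp b phi)%N.
  move=> phi_neq0; rewrite leqNgt; apply/negP => small.
  apply: (no_small _ _ (frame_supp_neq0 a_tight _ phi_neq0)
                       (frame_supp_neq0 b_tight _ phi_neq0) small _ phi_neq0).
  by split; apply: fsum_frame_supp.
split=> //; exists x; split=> //.
apply/eqP; rewrite eqn_leq lower_bound // andbT -card_ST.
by rewrite leq_add // subset_leq_card //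
  (frame_supp_sub a_tight, frame_supp_sub b_tight).
Qed.
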